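(* Let $\tau:\mathscr{A}\to\mathbb{C}$ be a linear functional with $|\tau(q)|\le C_0^{\deg q}$ for every monomial $q$, and let $A>1$ with $C_0/A<1/2$. For $g\in\mathscr{A}_0$ put $Q_m(\Sigma g)=Q_m(\Sigma g,\dots,\Sigma g)$. Then for all $f,g\in\mathscr{A}_0$, $$\|Q_m(\Sigma g)-Q_m(\Sigma f)\|_A\le2(2A^{-2})^m\sum_{k=0}^{m-1}\|g\|_A^k\|f\|_A^{m-k-1}\|f-g\|_A.$$ In particular $\|Q_m(\Sigma g)\|_A\le2(2A^{-2})^m\|g\|_A^m$.
   Context: $\mathscr{A}=\mathbb{C}\langle X_1,\dots,X_n\rangle$, $\mathscr{A}_0$ the span of monomials of degree $\ge1$; $\|P\|_A=\sum_q|\lambda_q(P)|A^{\deg q}$ for $P=\sum_q\lambda_q(P)q$. $\Sigma q=q/\deg q$ on monomials of degree $\ge1$. $\partial_j$: derivation with $\partial_jX_i=\delta_{ij}1\otimes1$; $\mathscr{D}_jq=\sum_{q=BX_jC}CB$; $\mathscr{J}\mathscr{D}g=(\partial_j\mathscr{D}_ig)_{i,j}$, with products in $M_n(\mathscr{A}\otimes\mathscr{A}^{op})$ using $(a\otimes b)(c\otimes d)=ac\otimes db$. $Q_m(g_1,\dots,g_m)=(1\otimes\tau+\tau\otimes1)\{\sum_i[(\mathscr{J}\mathscr{D}g_1)\cdots(\mathscr{J}\mathscr{D}g_m)]_{ii}\}$, where $(1\otimes\tau+\tau\otimes1)(a\otimes b)=a\tau(b)+\tau(a)b$. *)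

(* Noncommutative polynomials C<X_1..X_n> represented as
   formal finite linear combinations of words (monomials) over 'I_n;
   only the coefficient function (coef) matters for the norm. *)
From HB Require Import structures.
From mathcomp Require Import all_boot all_order all_algebra.
Set Implicit Arguments. Unset Strict Implicit. Unset Printing Implicit Defensive.
Import Order.TTheory GRing.Theory Num.Theory.
Local Open Scope ring_scope.

Section NC.
Variables (R : numClosedFieldType) (n : nat).

(* monomials X_{i1}...X_{ik} as words; degree = size *)
Definition word := seq 'I_n.
Definition ncpoly := seq (R * word).
(* element of A (x) A as formal sum of lambda * (w1 (x) w2) *)
Definition tpoly := seq (R * (word * word)).

Definition coef (P : ncpoly) (w : word) : R := \sum_(t <- P | t.2 == w) t.1.

Definition normA (A : R) (P : ncpoly) : R :=
  \sum_(w <- undup (map snd P)) `|coef P w| * A ^+ size w.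

Definition psub (P Q : ncpoly) : ncpoly := P ++ map (fun t => (- t.1, t.2)) Q.

Definition inA0 (P : ncpoly) : Prop := coef P [::] = 0.

Definition Sigma (P : ncpoly) : ncpoly :=
  map (fun t => (t.1 / (size t.2)%:R, t.2)) P.

Definition occ (j : 'I_n) (w : word) : seq nat :=
  [seq k <- iota 0 (size w) | nth j w k == j].

(* cyclic derivative D_j q = sum_{q = B X_j C} C B *)
Definition Dcyc (j : 'I_n) (P : ncpoly) : ncpoly :=
  flatten [seq [seq (t.1, drop k.+1 t.2 ++ take k t.2) | k <- occ j t.2] | t <- P].

(* free difference quotient d_j q = sum_{q = B X_j C} B (x) C *)
Definition partial (j : 'I_n) (P : ncpoly) : tpoly :=
  flatten [seq [seq (t.1, (take k t.2, drop k.+1 t.2)) | k <- occ j t.2] | t <- P].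

(* product in A (x) A^op : (a (x) b)(c (x) d) = ac (x) db *)
Definition tmul (S T : tpoly) : tpoly :=
  [seq (s.1 * t.1, (s.2.1 ++ t.2.1, t.2.2 ++ s.2.2)) | s <- S, t <- T].

Definition tmx := 'I_n -> 'I_n -> tpoly.

Definition mxmul (M N : tmx) : tmx :=
  fun i k => flatten [seq tmul (M i j) (N j k) | j <- enum 'I_n].

Definition mxid : tmx :=
  fun i j => if i == j then [:: (1, ([::], [::]))] else [::].

Definition JD (g : ncpoly) : tmx := fun i j => partial j (Dcyc i g).

Definition mxtrace (M : tmx) : tpoly := flatten [seq M i i | i <- enum 'I_n].

(* (1 (x) tau + tau (x) 1)(a (x) b) = a tau(b) + tau(a) b, tau given on monomials
   and extended linearly *)
Definition tauSym (tau : word -> R) (S : tpoly) : ncpoly :=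
  flatten [seq [:: (t.1 * tau t.2.2, t.2.1); (t.1 * tau t.2.1, t.2.2)] | t <- S].

Definition Q (tau : word -> R) (gs : seq ncpoly) : ncpoly :=
  tauSym tau (mxtrace (foldr (fun g M => mxmul (JD g) M) mxid gs)).

Definition QmS (tau : word -> R) (m : nat) (g : ncpoly) : ncpoly :=
  Q tau (nseq m (Sigma g)).

End NC.

From Pilot Require Import Defs.
(* Elements of C<X_1..X_n>, of C<X>(x)C<X>^op and matrices over the latter
   are formal finite sums of (coefficient, basis element) pairs, and every
   operation in the definition of Q_m acts on them term by term.  The proof
   combines three general facts.
   1. Multilinearity: pairing Q_m(g_1, ..., g_m) against any functional is a
      linear functional of each g_k.  Hence Q_m only sees the coefficients of
      its arguments (so they may be put in normal form, without
      cancellations), and Q_m(Sigma g) - Q_m(Sigma f) telescopes into the sum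
      over k of Q_m(Sigma g, .., Sigma g, Sigma (g - f), Sigma f, .., Sigma f).
   2. Weights: giving a (x) b the weight x^(deg a) y^(deg b) makes the product
      of C<X>(x)C<X>^op multiplicative and the total weight of matrices
      submultiplicative; the total weight of JD(Sigma q) for a monomial q of
      degree d is the homogeneous sum h_(d-1)(x, y).
   3. Scalar estimate: A^2 h_(d-1)(C0, A) <= 2 A^d when 2 C0 <= A.
   Together, ||Q_m(Sigma P_1, .., Sigma P_m)||_A <= 2 (2/A^2)^m prod_k ||P_k||_A,
   from which both claims of the theorem follow. *)

From HB Require Import structures.
From mathcomp Require Import all_boot all_order all_algebra.
From mathcomp Require Import ring zify.
Import Order.TTheory GRing.Theory Num.Theory.
Local Open Scope ring_scope.
Set Implicit Arguments. Unset Strict Implicit. Unset Printing Implicit Defensive.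

(* Formal finite sums [P = [:: (c_1, x_1); ...]] of elements of a type [X]
   with coefficients in a commutative ring; [pairing P phi] is the value at
   [P] of the linear extension of [phi : X -> R]. *)
Section Pairing.
Variable R : comPzRingType.

Definition pairing (X : Type) (P : seq (R * X)) (phi : X -> R) : R :=
  \sum_(t <- P) t.1 * phi t.2.

Variable X : Type.
Implicit Types (P Q : seq (R * X)) (phi psi : X -> R).

Lemma pairing_cat P Q phi : pairing (P ++ Q) phi = pairing P phi + pairing Q phi.
Proof. by rewrite /pairing big_cat. Qed.

Lemma pairing_unit (x : X) phi : pairing [:: (1, x)] phi = phi x.
Proof. by rewrite /pairing big_seq1 mul1r. Qed.

Lemma eq_pairing P phi psi : phi =1 psi -> pairing P phi = pairing P psi.
Proof. by move=> e; apply: eq_bigr => t _; rewrite e. Qed.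

Lemma pairing_sub P Q phi :
  pairing (P ++ [seq (- t.1, t.2) | t <- Q]) phi = pairing P phi - pairing Q phi.
Proof.
rewrite pairing_cat /pairing big_map -sumrN.
by congr (_ + _); apply: eq_bigr => t _; rewrite mulNr.
Qed.

Lemma pairing_sumf (I : Type) (r : seq I) P (F : I -> X -> R) :
  pairing P (fun x => \sum_(i <- r) F i x) = \sum_(i <- r) pairing P (F i).
Proof. by rewrite /pairing; under eq_bigr do rewrite mulr_sumr; exact: exchange_big. Qed.

Lemma pairing_swap (Y : Type) P (S : seq (R * Y)) (F : X -> Y -> R) :
  pairing P (fun x => pairing S (F x)) = pairing S (fun y => pairing P (F^~ y)).
Proof.
rewrite /pairing; under eq_bigr do rewrite mulr_sumr.
rewrite exchange_big /=; apply: eq_bigr => s _; rewrite mulr_sumr.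
by apply: eq_bigr => t _; rewrite mulrCA.
Qed.

Definition termwise (Y : Type) (F : seq (R * X) -> seq (R * Y)) : Prop :=
  forall chi : Y -> R, exists psi, forall P, pairing (F P) chi = pairing P psi.

Lemma termwiseE (Y : Type) (F : seq (R * X) -> seq (R * Y)) (chi : Y -> R) :
  termwise F -> forall P, pairing (F P) chi = pairing P (fun x => pairing (F [:: (1, x)]) chi).
Proof.
move=> /(_ chi) [psi H] P; rewrite H; apply: eq_pairing => x.
by rewrite H pairing_unit.
Qed.

End Pairing.

Section Coefficients.
Variables (R : comPzRingType) (X : eqType).
Implicit Types (P Q : seq (R * X)) (phi : X -> R).

Definition fcoef P (x : X) : R := \sum_(t <- P | t.2 == x) t.1.

Lemma fcoefE P y : fcoef P y = pairing P (fun x => (x == y)%:R).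
Proof.
rewrite /fcoef /pairing big_mkcond; apply: eq_bigr => t _.
by case: eqP; rewrite ?mulr1 ?mulr0.
Qed.

Lemma fcoef_cat P Q x : fcoef (P ++ Q) x = fcoef P x + fcoef Q x.
Proof. by rewrite /fcoef big_cat. Qed.

Lemma fcoef_notin P x : x \notin map snd P -> fcoef P x = 0.
Proof.
move=> xP; rewrite /fcoef big_hasC //; apply/hasPn => t tP; apply/eqP => e.
by rewrite -e map_f in xP.
Qed.

Lemma sum_by_support (G : R * X -> R) P (s : seq X) :
  uniq s -> {subset map snd P <= s} ->
  \sum_(t <- P) G t = \sum_(x <- s) \sum_(t <- P | t.2 == x) G t.
Proof.
move=> us sub; under [RHS]eq_bigr do rewrite big_mkcond.
rewrite exchange_big /= big_seq [RHS]big_seq; apply: eq_bigr => t tP.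
rewrite -big_mkcond -big_filter /= (eq_filter (a2 := pred1 t.2)) => [|x]; last first.
  by rewrite /= eq_sym.
by rewrite filter_pred1_uniq ?big_seq1 // sub ?map_f.
Qed.

Lemma pairing_by_coef P phi (s : seq X) :
  uniq s -> {subset map snd P <= s} -> pairing P phi = \sum_(x <- s) fcoef P x * phi x.
Proof.
move=> us sub; rewrite /pairing (sum_by_support _ us sub); apply: eq_bigr => x _.
by rewrite /fcoef mulr_suml; apply: eq_bigr => t /eqP ->.
Qed.

Lemma common_support P Q :
  let s := undup (map snd (P ++ Q)) in
  [/\ uniq s, {subset map snd P <= s} & {subset map snd Q <= s}].
Proof.
split; first exact: undup_uniq.
- by move=> x xP; rewrite mem_undup map_cat mem_cat xP.
- by move=> x xQ; rewrite mem_undup map_cat mem_cat xQ orbT.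
Qed.

Lemma eq_pairing_coef P Q phi :
  fcoef P =1 fcoef Q -> pairing P phi = pairing Q phi.
Proof.
move=> e; have [us subP subQ] := common_support P Q.
rewrite (pairing_by_coef _ us subP) (pairing_by_coef _ us subQ).
by apply: eq_bigr => x _; rewrite e.
Qed.

Definition normal_form P : seq (R * X) := [seq (fcoef P x, x) | x <- undup (map snd P)].

Lemma fcoef_normal_form P : fcoef (normal_form P) =1 fcoef P.
Proof.
move=> x; have [xP|xP] := boolP (x \in undup (map snd P)).
  rewrite /fcoef /normal_form big_map /= -big_filter.
  rewrite (eq_filter (a2 := pred1 x)) => [|y]; last by rewrite /= eq_sym.
  by rewrite filter_pred1_uniq ?undup_uniq // big_seq1.
rewrite fcoef_notin; last by rewrite /normal_form -map_comp map_id.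
by rewrite fcoef_notin // -mem_undup.
Qed.

End Coefficients.

Section Norms.
Variables (R : numDomainType) (X : eqType) (deg : X -> nat) (A : R).
Hypothesis A_ge0 : 0 <= A.
Implicit Types P Q : seq (R * X).

Definition fnorm P : R := \sum_(x <- undup (map snd P)) `|fcoef P x| * A ^+ deg x.

(* The same quantity computed term by term, ignoring cancellations. *)
Definition fweight P : R := \sum_(t <- P) `|t.1| * A ^+ deg t.2.

Lemma fnorm_by_support P (s : seq X) :
  uniq s -> {subset map snd P <= s} ->
  fnorm P = \sum_(x <- s) `|fcoef P x| * A ^+ deg x.
Proof.
move=> us sub; rewrite [RHS](bigID (fun x => x \in map snd P)) /=.
rewrite [X in _ + X]big1 ?addr0 => [|x /fcoef_notin ->]; last by rewrite normr0 mul0r.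
rewrite -big_filter; apply: perm_big; apply: uniq_perm.
- exact: undup_uniq.
- exact: filter_uniq.
- by move=> x; rewrite mem_undup mem_filter andb_idr // => /sub.
Qed.

Lemma eq_fnorm P Q : (forall x, `|fcoef P x| = `|fcoef Q x|) -> fnorm P = fnorm Q.
Proof.
move=> e; have [us subP subQ] := common_support P Q.
rewrite (fnorm_by_support us subP) (fnorm_by_support us subQ).
by apply: eq_bigr => x _; rewrite e.
Qed.

Lemma fnorm_le_weight P : fnorm P <= fweight P.
Proof.
have sub : {subset map snd P <= undup (map snd P)} by move=> x; rewrite mem_undup.
rewrite /fweight (sum_by_support _ (undup_uniq _) sub); apply: ler_sum => x _.
rewrite (le_trans (ler_wpM2r (exprn_ge0 _ A_ge0) (ler_norm_sum _ _ _))) //.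
by rewrite mulr_suml le_eqVlt; apply/orP; left; apply/eqP/eq_bigr => t /eqP ->.
Qed.

Lemma fnorm_cat P Q : fnorm (P ++ Q) <= fnorm P + fnorm Q.
Proof.
have [us subP subQ] := common_support P Q.
have subPQ : {subset map snd (P ++ Q) <= undup (map snd (P ++ Q))}.
  by move=> x; rewrite mem_undup.
rewrite (fnorm_by_support us subP) (fnorm_by_support us subQ).
rewrite (fnorm_by_support us subPQ) -big_split /=; apply: ler_sum => x _.
rewrite fcoef_cat -mulrDl ler_wpM2r ?exprn_ge0 //; exact: ler_normD.
Qed.

Lemma fnorm_flatten (Ps : seq (seq (R * X))) :
  fnorm (flatten Ps) <= \sum_(P <- Ps) fnorm P.
Proof.
elim: Ps => [|P Ps IH]; first by rewrite big_nil /fnorm big_nil.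
by rewrite big_cons (le_trans (fnorm_cat _ _)) // lerD2l.
Qed.

(* In normal form there are no cancellations, so weight and norm agree. *)
Lemma fweight_normal_form P : fweight (normal_form P) = fnorm P.
Proof. by rewrite /fweight /normal_form big_map. Qed.

End Norms.

Section Multilinearity.
Variables (R : numClosedFieldType) (n : nat).
Local Notation word := (word n).
Local Notation ncpoly := (ncpoly R n).
Local Notation tpoly := (tpoly R n).
Local Notation tmx := (tmx R n).

Lemma pairing_Sigma (P : ncpoly) phi :
  pairing (Sigma P) phi = pairing P (fun w => phi w / (size w)%:R).
Proof. by rewrite /pairing /Sigma big_map; apply: eq_bigr => t _ /=; ring. Qed.

Lemma pairing_Dcyc i (P : ncpoly) phi :
  pairing (Dcyc i P) phi =
  pairing P (fun w => \sum_(k <- occ i w) phi (drop k.+1 w ++ take k w)).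
Proof.
rewrite /pairing /Dcyc big_flatten big_map; apply: eq_bigr => t _.
by rewrite big_map mulr_sumr.
Qed.

Lemma pairing_partial j (P : ncpoly) (phi : word * word -> R) :
  pairing (partial j P) phi =
  pairing P (fun w => \sum_(k <- occ j w) phi (take k w, drop k.+1 w)).
Proof.
rewrite /pairing /partial big_flatten big_map; apply: eq_bigr => t _.
by rewrite big_map mulr_sumr.
Qed.

Lemma pairing_tmul (S T : tpoly) phi :
  pairing (tmul S T) phi =
  pairing S (fun a => pairing T (fun b => phi (a.1 ++ b.1, b.2 ++ a.2))).
Proof.
rewrite /pairing /tmul big_allpairs_dep; apply: eq_bigr => s _.
by rewrite mulr_sumr; apply: eq_bigr => t _ /=; ring.
Qed.

Lemma pairing_mxmul (M N : tmx) i k phi :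
  pairing (mxmul M N i k) phi = \sum_(j <- enum 'I_n) pairing (tmul (M i j) (N j k)) phi.
Proof. by rewrite /pairing /mxmul big_flatten big_map. Qed.

Lemma pairing_trace (M : tmx) phi :
  pairing (Defs.mxtrace M) phi = \sum_(i <- enum 'I_n) pairing (M i i) phi.
Proof. by rewrite /pairing /Defs.mxtrace big_flatten big_map. Qed.

Lemma pairing_tauSym tau (S : tpoly) phi :
  pairing (tauSym tau S) phi =
  pairing S (fun ab => tau ab.2 * phi ab.1 + tau ab.1 * phi ab.2).
Proof.
rewrite /pairing /tauSym big_flatten big_map; apply: eq_bigr => t _.
by rewrite !big_cons big_nil /=; ring.
Qed.

Definition JDprod (gs : seq ncpoly) : tmx := foldr (fun g M => mxmul (JD g) M) (@mxid R n) gs.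

Lemma termwise_JDprod (pre post : seq ncpoly) i k :
  termwise (fun X => JDprod (pre ++ X :: post) i k).
Proof.
elim: pre i k => [|g pre IH] i k chi /=.
  eexists => X; rewrite pairing_mxmul.
  under eq_bigr do rewrite pairing_tmul /JD pairing_partial pairing_Dcyc.
  by rewrite -pairing_sumf.
eexists => X; rewrite pairing_mxmul.
under eq_bigr do rewrite pairing_tmul pairing_swap (termwiseE _ (IH _ _)).
by rewrite -pairing_sumf.
Qed.

Lemma termwise_Q tau (pre post : seq ncpoly) :
  termwise (fun X => Q tau (pre ++ X :: post)).
Proof.
move=> chi; eexists => X; rewrite /Q pairing_tauSym pairing_trace.
under eq_bigr do rewrite (termwiseE _ (termwise_JDprod _ _ _ _)).
by rewrite -pairing_sumf.
Qed.

Lemma Q_normal_form tau (pre Ps : seq ncpoly) phi :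
  pairing (Q tau (pre ++ map (@Sigma R n) Ps)) phi =
  pairing (Q tau (pre ++ map (@Sigma R n) (map (@normal_form _ _) Ps))) phi.
Proof.
elim: Ps pre => [|P Ps IH] pre //=.
have [psi slot] := termwise_Q tau pre (map (@Sigma R n) Ps) phi.
rewrite slot pairing_Sigma -(eq_pairing_coef _ (fcoef_normal_form P)) -pairing_Sigma -slot.
by rewrite -!cat_rcons IH.
Qed.

End Multilinearity.

Lemma ler_sum_term (R : numDomainType) (I : eqType) (r : seq I) (F : I -> R) j :
  uniq r -> j \in r -> (forall i, 0 <= F i) -> F j <= \sum_(i <- r) F i.
Proof.
by move=> ur jr F0; rewrite (bigD1_seq j) //= lerDl sumr_ge0.
Qed.

(* This weight is
   multiplicative for the product of A (x) A^op, hence the total weight of the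
   entries of a matrix is submultiplicative. *)
Section Weights.
Variables (R : numClosedFieldType) (n : nat) (x y : R).
Hypotheses (x_ge0 : 0 <= x) (y_ge0 : 0 <= y).
Local Notation tpoly := (tpoly R n).
Local Notation tmx := (tmx R n).

Definition tweight (S : tpoly) : R :=
  \sum_(t <- S) `|t.1| * (x ^+ size t.2.1 * y ^+ size t.2.2).

Definition mxweight (M : tmx) : R :=
  \sum_(i <- enum 'I_n) \sum_(k <- enum 'I_n) tweight (M i k).

Lemma tweight_ge0 S : 0 <= tweight S.
Proof. by apply: sumr_ge0 => t _; rewrite !mulr_ge0 ?exprn_ge0. Qed.

Lemma mxweight_ge0 M : 0 <= mxweight M.
Proof. by apply: sumr_ge0 => i _; apply: sumr_ge0 => k _; apply: tweight_ge0. Qed.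

Lemma tweight_tmul S T : tweight (tmul S T) = tweight S * tweight T.
Proof.
rewrite /tweight /tmul big_allpairs_dep mulr_suml; apply: eq_bigr => s _.
rewrite mulr_sumr; apply: eq_bigr => t _ /=.
by rewrite normrM !size_cat !exprD; ring.
Qed.

Lemma tweight_mxmul (M N : tmx) i k :
  tweight (mxmul M N i k) = \sum_(j <- enum 'I_n) tweight (M i j) * tweight (N j k).
Proof.
rewrite /tweight /mxmul big_flatten big_map; apply: eq_bigr => j _.
exact: tweight_tmul.
Qed.

Lemma mxweight_mxmul M N : mxweight (mxmul M N) <= mxweight M * mxweight N.
Proof.
rewrite /mxweight mulr_suml; apply: ler_sum => i _.
under eq_bigr do rewrite tweight_mxmul.
rewrite exchange_big /= mulr_suml; apply: ler_sum => j _.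
rewrite -mulr_sumr ler_wpM2l ?tweight_ge0 //.
apply: (ler_sum_term (F := fun j => \sum_(k <- enum 'I_n) tweight (N j k))).
- exact: enum_uniq.
- by rewrite mem_enum.
- by move=> j'; apply: sumr_ge0 => k _; apply: tweight_ge0.
Qed.

Lemma mxweight_mxmul_id M : mxweight (mxmul M (@mxid R n)) = mxweight M.
Proof.
have tw_id j k : tweight (@mxid R n j k) = (j == k)%:R.
  rewrite /tweight /mxid; case: eqP => _; last by rewrite big_nil.
  by rewrite big_seq1 normr1 !expr0 !mulr1.
apply: eq_bigr => i _; apply: eq_bigr => k _.
rewrite tweight_mxmul (bigD1_seq k) ?mem_enum ?enum_uniq //= tw_id eqxx mulr1.
by rewrite big1 ?addr0 // => j /negbTE jk; rewrite tw_id jk mulr0.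
Qed.

Lemma mxweight_JDprod g gs :
  mxweight (JDprod (g :: gs)) <= \prod_(h <- g :: gs) mxweight (JD h).
Proof.
elim: gs g => [|h gs IH] g.
  by rewrite big_seq1 /= mxweight_mxmul_id.
rewrite big_cons (le_trans (mxweight_mxmul _ _)) // ler_wpM2l ?mxweight_ge0 //.
exact: IH.
Qed.

Lemma tweight_trace M : tweight (Defs.mxtrace M) <= mxweight M.
Proof.
rewrite /tweight /Defs.mxtrace big_flatten big_map; apply: ler_sum => i _.
apply: (ler_sum_term (F := fun k => tweight (M i k))).
- exact: enum_uniq.
- by rewrite mem_enum.
- by move=> k; apply: tweight_ge0.
Qed.

End Weights.

(* The complete homogeneous sum [h_e(x, y) = sum_(k < e) x ^ k * y ^ (e - 1 - k)]:
   the total weight of [JD q] for a monomial [q] of degree [d] is [d * h_(d-1)]. *)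
Definition hsum (R : comPzRingType) (x y : R) (e : nat) : R :=
  \sum_(k <- iota 0 e) x ^+ k * y ^+ (e - k.+1).

Lemma hsumC (R : comPzRingType) (x y : R) e : hsum x y e = hsum y x e.
Proof.
have iotaE : iota 0 e = index_iota 0 e by rewrite /index_iota subn0.
rewrite /hsum iotaE big_nat_rev /= big_seq [RHS]big_seq.
apply: eq_bigr => k; rewrite mem_index_iota add0n => /andP[_ ke].
by rewrite mulrC; have -> : (e - (e - k.+1).+1 = k)%N by lia.
Qed.

Lemma hsumS (R : comPzRingType) (x y : R) e : hsum x y e.+1 = y ^+ e + x * hsum x y e.
Proof.
rewrite /hsum /= big_cons expr0 mul1r subn1 /=; congr (_ + _).
rewrite -[1%N]addn0 iotaDl big_map mulr_sumr; apply: eq_bigr => k _.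
by rewrite add1n exprS subSS mulrA.
Qed.

Section JDweight.
Variables (R : numClosedFieldType) (n : nat) (x y : R).
Local Notation word := (word n).
Local Notation ncpoly := (ncpoly R n).

Lemma sum_occ (w : word) (G : nat -> R) :
  \sum_(j <- enum 'I_n) \sum_(k <- occ j w) G k = \sum_(k <- iota 0 (size w)) G k.
Proof.
rewrite /occ; under eq_bigr do rewrite big_filter big_mkcond.
rewrite exchange_big /= big_seq [RHS]big_seq; apply: eq_bigr => k.
rewrite mem_iota add0n => /andP[_ kw]; rewrite -big_mkcond /=.
case: w kw => // a w kw.
rewrite -big_filter (eq_filter (a2 := pred1 (nth a (a :: w) k))) => [|j]; last first.
  by rewrite /= (set_nth_default a j kw); apply/eqP/eqP => [<-|->].
by rewrite filter_pred1_uniq ?enum_uniq ?mem_enum // big_seq1.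
Qed.

Lemma tweight_partial (L : ncpoly) :
  \sum_(j <- enum 'I_n) tweight x y (partial j L) = \sum_(u <- L) `|u.1| * hsum x y (size u.2).
Proof.
rewrite /tweight /partial; under eq_bigr do rewrite big_flatten big_map.
rewrite exchange_big /=; apply: eq_bigr => u _.
under eq_bigr do rewrite big_map /= -mulr_sumr.
rewrite -mulr_sumr sum_occ /hsum; congr (_ * _).
rewrite big_seq [RHS]big_seq; apply: eq_bigr => k.
by rewrite mem_iota add0n => /andP[_ kw]; rewrite size_takel ?size_drop // ltnW.
Qed.

(* The factor [1 / deg q] of [Sigma] cancels the [deg q] cyclic derivatives. *)
Lemma mxweight_JD_Sigma (P : ncpoly) :
  mxweight x y (JD (Sigma P)) = \sum_(t <- P) `|t.1| * hsum x y (size t.2).-1.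
Proof.
rewrite /mxweight /JD.
under eq_bigr do rewrite tweight_partial /Dcyc big_flatten big_map.
rewrite exchange_big /Sigma big_map; apply: eq_bigr => t _ /=.
under eq_bigr do rewrite big_map /= -mulr_sumr.
rewrite -mulr_sumr sum_occ big_seq (eq_bigr (fun=> hsum x y (size t.2).-1)); last first.
  move=> k; rewrite mem_iota add0n => /andP[_ kw].
  rewrite size_cat size_drop size_takel ?(ltnW kw) //; congr (hsum x y _).
  by move: kw; set s := size t.2; lia.
rewrite -big_seq big_const_seq count_predT size_iota iter_addr_0.
case: (size t.2) => [|d]; first by rewrite mulr0n mulr0 /hsum big_nil mulr0.
rewrite -[hsum _ _ _ *+ _]mulr_natr.
by rewrite normrM normfV normr_nat; field; rewrite addrC natr1 pnatr_eq0.
Qed.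

End JDweight.

Section ScalarBound.
Variables (R : numFieldType) (C A : R).
Hypotheses (C_ge0 : 0 <= C) (A_gt0 : 0 < A) (twoC_le_A : 2 * C <= A).

Lemma hsum_le e : A * hsum C A e <= 2 * A ^+ e.
Proof.
elim: e => [|e IH]; first by rewrite /hsum big_nil mulr0 mulr_ge0.
rewrite hsumS mulrDr mulrCA exprS.
have step : C * (A * hsum C A e) <= A * A ^+ e.
  rewrite (le_trans (ler_wpM2l C_ge0 IH)) // mulrA.
  by apply: ler_wpM2r; [exact/exprn_ge0/ltW | rewrite mulrC].
by rewrite (le_trans (lerD (lexx _) step)) // -mulr2n mulr_natl.
Qed.

Lemma hsum_pred_le d : hsum C A d.-1 <= 2 / A ^+ 2 * A ^+ d.
Proof.
have A2_gt0 : 0 < A ^+ 2 by exact: exprn_gt0.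
rewrite -(ler_pM2l A2_gt0) mulrA mulrCA mulfV ?mulr1 ?lt0r_neq0 //.
case: d => [|d]; first by rewrite /hsum big_nil mulr0 mulr_ge0 ?exprn_ge0 ?ltW.
by rewrite expr2 -mulrA exprS [2 * _]mulrCA; apply: ler_wpM2l; [exact: ltW | exact: hsum_le].
Qed.

End ScalarBound.

Section ProductBound.
Variables (R : numClosedFieldType) (n : nat) (tau : word n -> R) (C0 A : R).
Hypotheses (C0_ge0 : 0 <= C0) (tau_le : forall q : word n, `|tau q| <= C0 ^+ size q)
  (A_gt0 : 0 < A) (twoC0_le_A : 2 * C0 <= A).
Local Notation ncpoly := (ncpoly R n).
Local Notation tpoly := (tpoly R n).
Local Notation weight := (fweight (@size 'I_n) A).

Lemma normA_fnorm (P : ncpoly) : normA A P = fnorm (@size 'I_n) A P.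
Proof. by []. Qed.

Lemma weight_tauSym (S : tpoly) :
  weight (tauSym tau S) <= tweight A C0 S + tweight C0 A S.
Proof.
rewrite /fweight /tauSym big_flatten big_map /tweight -big_split /=.
apply: ler_sum => t _; rewrite !big_cons big_nil addr0 /=.
have A_ge0 : 0 <= A by exact: ltW.
apply: lerD; rewrite normrM -mulrA ler_wpM2l //.
  by rewrite mulrC ler_wpM2l ?exprn_ge0.
by rewrite mulrC [X in _ <= X]mulrC ler_wpM2l ?exprn_ge0.
Qed.

Lemma mxweight_JD_Sigma_le x y (P : ncpoly) :
  (forall d, hsum x y d.-1 <= 2 / A ^+ 2 * A ^+ d) ->
  mxweight x y (JD (Sigma P)) <= 2 / A ^+ 2 * weight P.
Proof.
move=> hsum_le; rewrite mxweight_JD_Sigma /fweight mulr_sumr; apply: ler_sum => t _.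
by rewrite mulrCA ler_wpM2l.
Qed.

(* The estimate for the term-by-term weight; the two summands of
   [1 (x) tau + tau (x) 1] account for the factor 2. *)
Lemma weight_Q (P0 : ncpoly) (Ps : seq ncpoly) :
  weight (Q tau (map (@Sigma R n) (P0 :: Ps))) <=
  2 * (2 / A ^+ 2) ^+ (size Ps).+1 * \prod_(P <- P0 :: Ps) weight P.
Proof.
have A_ge0 : 0 <= A by exact: ltW.
set bound := (2 / A ^+ 2) ^+ (size Ps).+1 * \prod_(P <- P0 :: Ps) weight P.
have trace_le x y : 0 <= x -> 0 <= y -> (forall d, hsum x y d.-1 <= 2 / A ^+ 2 * A ^+ d) ->
    tweight x y (Defs.mxtrace (JDprod (map (@Sigma R n) (P0 :: Ps)))) <= bound.
  move=> x_ge0 y_ge0 hsum_le.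
  have prod_const (c : R) (s : seq ncpoly) : \prod_(P <- s) c = c ^+ size s.
    by rewrite big_const_seq count_predT iter_mulr_1.
  rewrite map_cons (le_trans (tweight_trace _ _ _)) // (le_trans (mxweight_JDprod _ _ _ _)) //.
  rewrite /bound -map_cons big_map -[(size Ps).+1]/(size (P0 :: Ps)) -prod_const -big_split.
  by apply: ler_prod => P _; rewrite mxweight_ge0 //= mxweight_JD_Sigma_le.
have hsumC0A := hsum_pred_le C0_ge0 A_gt0 twoC0_le_A.
have hsumAC0 d : hsum A C0 d.-1 <= 2 / A ^+ 2 * A ^+ d by rewrite hsumC.
rewrite (le_trans (weight_tauSym _)) // -mulrA mulr_natl mulr2n.
by apply: lerD; apply: trace_le.
Qed.

Lemma normA_Q_le (Ps : seq ncpoly) : (0 < size Ps)%N ->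
  normA A (Q tau (map (@Sigma R n) Ps)) <=
  2 * (2 / A ^+ 2) ^+ size Ps * \prod_(P <- Ps) normA A P.
Proof.
case: Ps => // P0 Ps _.
have Q_nf : normA A (Q tau (map (@Sigma R n) (P0 :: Ps))) =
            normA A (Q tau (map (@Sigma R n) (map (@normal_form _ _) (P0 :: Ps)))).
  apply: eq_fnorm => y; rewrite !fcoefE.
  by rewrite -[map _ (P0 :: Ps)]cat0s Q_normal_form.
rewrite Q_nf normA_fnorm (le_trans (fnorm_le_weight _ (ltW A_gt0) _)) //.
rewrite [map (@normal_form _ _) _]map_cons (le_trans (weight_Q _ _)) //.
rewrite size_map -map_cons big_map.
by under eq_bigr do rewrite fweight_normal_form.
Qed.

End ProductBound.

Section Telescoping.
Variables (R : numClosedFieldType) (n : nat) (tau : word n -> R) (m : nat).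
Variables f g : ncpoly R n.
Local Notation QS Ps := (Q tau (map (@Sigma R n) Ps)).

Definition interpolant k := QS (nseq k g ++ nseq (m - k) f).

Definition increment k := QS (nseq k g ++ psub g f :: nseq (m - k - 1) f).

Lemma fcoef_increment k y : (k < m)%N ->
  fcoef (increment k) y = fcoef (interpolant k.+1) y - fcoef (interpolant k) y.
Proof.
move=> km; rewrite /increment /interpolant !fcoefE.
set j := (m - k - 1)%N.
have -> : (m - k = j.+1)%N by rewrite /j; lia.
have -> : (m - k.+1 = j)%N by rewrite /j; lia.
rewrite -[in nseq k.+1 g]addn1 nseqD -catA /= !map_cat !map_cons.
have [psi slot] := termwise_Q tau (map (@Sigma R n) (nseq k g))
  (map (@Sigma R n) (nseq j f)) (fun x => (x == y)%:R).
by rewrite !slot !pairing_Sigma /psub pairing_sub.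
Qed.

Lemma fcoef_telescope y :
  fcoef (psub (QmS tau m g) (QmS tau m f)) y = \sum_(0 <= k < m) fcoef (increment k) y.
Proof.
rewrite (telescope_sumr_eq (fun k => fcoef (interpolant k) y)) //; last first.
  by move=> k /andP[_ km]; apply: fcoef_increment.
rewrite /interpolant subnn subn0 cats0 /= !map_nseq /QmS.
by rewrite !fcoefE /psub pairing_sub.
Qed.

End Telescoping.

Section Estimates.
Variables (R : numClosedFieldType) (n : nat) (tau : word n -> R) (C0 A : R).
Hypotheses (C0_ge0 : 0 <= C0) (tau_le : forall q : word n, `|tau q| <= C0 ^+ size q)
  (A_gt0 : 0 < A) (twoC0_le_A : 2 * C0 <= A).
Local Notation ncpoly := (ncpoly R n).

Lemma normA_psubC (f g : ncpoly) : normA A (psub f g) = normA A (psub g f).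
Proof.
by apply: eq_fnorm => x; rewrite !fcoefE /psub !pairing_sub -normrN opprB.
Qed.

Lemma prod_nseq (k : nat) (a : ncpoly) (F : ncpoly -> R) :
  \prod_(P <- nseq k a) F P = F a ^+ k.
Proof. by rewrite big_nseq iter_mulr_1. Qed.

Lemma normA_QmS_sub (m : nat) (f g : ncpoly) : (0 < m)%N ->
  normA A (psub (QmS tau m g) (QmS tau m f))
    <= 2 * (2 / A ^+ 2) ^+ m *
       \sum_(k < m) normA A g ^+ k * normA A f ^+ (m - k - 1) * normA A (psub f g).
Proof.
move=> m_gt0; have A_ge0 : 0 <= A by exact: ltW.
have -> : normA A (psub (QmS tau m g) (QmS tau m f)) =
    normA A (flatten [seq increment tau m f g k | k <- index_iota 0 m]).
  apply: eq_fnorm => y; rewrite fcoef_telescope; congr `|_|.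
  by rewrite /fcoef big_flatten big_map.
rewrite normA_fnorm (le_trans (fnorm_flatten _ A_ge0 _)) //.
rewrite big_map big_mkord mulr_sumr; apply: ler_sum => -[k km] _ /=.
have size_args : size (nseq k g ++ psub g f :: nseq (m - k - 1) f) = m.
  by rewrite size_cat /= !size_nseq; lia.
rewrite -normA_fnorm; apply: le_trans (normA_Q_le C0_ge0 tau_le A_gt0 twoC0_le_A _) _.
  by rewrite size_args.
rewrite size_args big_cat big_cons !prod_nseq normA_psubC /=.
by rewrite [normA A (psub f g) * _]mulrC [normA A g ^+ k * _]mulrA.
Qed.

Lemma normA_QmS (m : nat) (g : ncpoly) : (0 < m)%N ->
  normA A (QmS tau m g) <= 2 * (2 / A ^+ 2) ^+ m * normA A g ^+ m.
Proof.
move=> m_gt0; rewrite /QmS -map_nseq.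
rewrite (le_trans (normA_Q_le C0_ge0 tau_le A_gt0 twoC0_le_A _)) ?size_nseq //.
by rewrite prod_nseq.
Qed.

End Estimates.

(* The condition [C0 / A < 1/2] gives [2 C0 <= A]. *)
Theorem mainTheorem9 (R : numClosedFieldType) (n : nat)
  (tau : word n -> R) (C0 A : R)
  (hC0 : 0 <= C0)
  (htau : forall q : word n, `|tau q| <= C0 ^+ size q)
  (hA : 1 < A) (hCA : C0 / A < 1 / 2)
  (m : nat) (hm : (0 < m)%N) (f g : ncpoly R n)
  (hf : inA0 f) (hg : inA0 g) :
  normA A (psub (QmS tau m g) (QmS tau m f))
    <= 2 * (2 / A ^+ 2) ^+ m *
       \sum_(k < m) normA A g ^+ k * normA A f ^+ (m - k - 1) * normA A (psub f g)
  /\ normA A (QmS tau m g) <= 2 * (2 / A ^+ 2) ^+ m * normA A g ^+ m.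
Proof.
have A_gt0 : 0 < A := lt_trans ltr01 hA.
have twoC0_le_A : 2 * C0 <= A.
  move: hCA; rewrite ltr_pdivrMr // mul1r => /ltW C0_le.
  by rewrite (le_trans (ler_wpM2l (ler0n R 2) C0_le)) // mulrA divff ?mul1r ?pnatr_eq0.
split; first exact: (normA_QmS_sub hC0 htau A_gt0 twoC0_le_A f g hm).
exact: (normA_QmS hC0 htau A_gt0 twoC0_le_A g hm).
Qed.
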